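(* The following assignments define a 2-functor $\mathrm{AM}:\mathbf{Adj}(\mathbf{IdxPos})\to\square\text{-}\mathbf{IdxPos}$: an adjunction $\mathbb A=(P^{\mathbb A},Q^{\mathbb A},L^{\mathbb A},\lambda^{\mathbb A},R^{\mathbb A},\rho^{\mathbb A},\eta^{\mathbb A},\epsilon^{\mathbb A})$ is sent to $(Q^{\mathbb A}\circ(L^{\mathbb A})^{op},\square^{\mathbb A})$ where $\square^{\mathbb A}_X=\lambda^{\mathbb A}_X\circ P^{\mathbb A}(\eta^{\mathbb A}_X)\circ\rho^{\mathbb A}_{L^{\mathbb A}X}$; a 1-arrow $(F,f,G,g,\theta):\mathbb A\to\mathbb B$ is sent to $(F,g(L^{\mathbb A})^{op})$, i.e. the functor $F$ together with the natural transformation with components $g_{L^{\mathbb A}X}:Q^{\mathbb A}(L^{\mathbb A}X)\to Q^{\mathbb B}(GL^{\mathbb A}X)=Q^{\mathbb B}(L^{\mathbb B}FX)$; a 2-arrow $(\alpha,\beta)$ is sent to $\alpha$.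
   Context: A doctrine is a functor $P:\mathcal C^{op}\to\mathbf{Pos}$; for $t:X\to Y$, $P(t):PY\to PX$ is reindexing. In the 2-category $\mathbf{IdxPos}$, a 1-arrow $(F,f):P\to Q$ (with $P:\mathcal C^{op}\to\mathbf{Pos}$, $Q:\mathcal D^{op}\to\mathbf{Pos}$) is a functor $F:\mathcal C\to\mathcal D$ with a natural transformation $f:P\Rightarrow Q\circ F^{op}$; a 2-arrow $\theta:(F,f)\Rightarrow(F',f')$ is a natural transformation $\theta:F\Rightarrow F'$ with $f_X(\alpha)\le Q(\theta_X)(f'_X(\alpha))$ for all $X,\alpha$; composition of $(G,g)$ then $(F,f)$ is $(FG,(fG^{op})\cdot g)$ (components $f_{GX}\circ g_X$), and 2-arrows compose as natural transformations. An interior operator on a doctrine $M:\mathcal C^{op}\to\mathbf{Pos}$ is a natural transformation $\square:M\Rightarrow M$ with $\square_X(\alpha)\le\alpha$ and $\square_X(\alpha)\le\square_X(\square_X\alpha)$. The 2-category $\square\text{-}\mathbf{IdxPos}$ has objects pairs $(M,\square)$ of a doctrine with an interior operator; a 1-arrow $(M,\square)\to(N,\square')$ is a 1-arrow $(F,f):M\to N$ of $\mathbf{IdxPos}$ with $f_X(\square_X\alpha)\le\square'_{FX}(f_X\alpha)$ for all $X,\alpha$; 2-arrows and compositions are those of $\mathbf{IdxPos}$. An adjunction in $\mathbf{IdxPos}$ is written as an octuple $\mathbb A=(P^{\mathbb A},Q^{\mathbb A},L^{\mathbb A},\lambda^{\mathbb A},R^{\mathbb A},\rho^{\mathbb A},\eta^{\mathbb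 A},\epsilon^{\mathbb A})$ with $P^{\mathbb A}:(\mathcal C^{\mathbb A})^{op}\to\mathbf{Pos}$, $Q^{\mathbb A}:(\mathcal D^{\mathbb A})^{op}\to\mathbf{Pos}$, meaning: $L^{\mathbb A}\dashv R^{\mathbb A}$ is an adjunction of categories with unit $\eta^{\mathbb A}$ and counit $\epsilon^{\mathbb A}$, $\lambda^{\mathbb A}:P^{\mathbb A}\Rightarrow Q^{\mathbb A}(L^{\mathbb A})^{op}$ and $\rho^{\mathbb A}:Q^{\mathbb A}\Rightarrow P^{\mathbb A}(R^{\mathbb A})^{op}$ are natural, $\alpha\le P^{\mathbb A}(\eta_X)(\rho_{LX}(\lambda_X\alpha))$ and $\lambda_{RY}(\rho_Y\beta)\le Q^{\mathbb A}(\epsilon_Y)(\beta)$ (dropping superscripts). The 2-category $\mathbf{Adj}(\mathbf{IdxPos})$ has such adjunctions as objects. A 1-arrow $(F,f,G,g,\theta):\mathbb A\to\mathbb B$ consists of 1-arrows $(F,f):P^{\mathbb A}\to P^{\mathbb B}$, $(G,g):Q^{\mathbb A}\to Q^{\mathbb B}$ of $\mathbf{IdxPos}$ and a natural transformation $\theta:FR^{\mathbb A}\Rightarrow R^{\mathbb B}G$ such that: $GL^{\mathbb A}=L^{\mathbb B}F$; $(\theta L^{\mathbb A})\cdot(F\eta^{\mathbb A})=\eta^{\mathbb B}F$; $g_{L^{\mathbb A}X}\circ\lambda^{\mathbb A}_X=\lambda^{\mathbb B}_{FX}\circ f_X$ for all $X$; and $f_{R^{\mathbb A}Y}(\rho^{\mathbb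 A}_Y\beta)\le P^{\mathbb B}(\theta_Y)(\rho^{\mathbb B}_{GY}(g_Y\beta))$ for all $Y$ and $\beta\in Q^{\mathbb A}Y$. A 2-arrow $(\alpha,\beta):(F,f,G,g,\theta)\Rightarrow(F',f',G',g',\theta')$ consists of 2-arrows $\alpha:(F,f)\Rightarrow(F',f')$ and $\beta:(G,g)\Rightarrow(G',g')$ of $\mathbf{IdxPos}$ with $L^{\mathbb B}\alpha=\beta L^{\mathbb A}$ and $\theta'\cdot(\alpha R^{\mathbb A})=(R^{\mathbb B}\beta)\cdot\theta$. Composition of 1-arrows composes the two 1-arrow components in $\mathbf{IdxPos}$ and the $\theta$'s as $(\theta'G)\cdot(F'\theta)$; 2-arrows compose componentwise. *)

From Stdlib Require Import ProofIrrelevance FunctionalExtensionality.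

Record Cat := {
  Ob :> Type;
  Hom : Ob -> Ob -> Type;
  idm : forall X, Hom X X;
  cmp : forall X Y Z, Hom Y Z -> Hom X Y -> Hom X Z;
  cmp_idl : forall X Y (f : Hom X Y), cmp X Y Y (idm Y) f = f;
  cmp_idr : forall X Y (f : Hom X Y), cmp X X Y f (idm X) = f;
  cmp_assoc : forall X Y Z W (h : Hom Z W) (g : Hom Y Z) (f : Hom X Y),
      cmp X Z W h (cmp X Y Z g f) = cmp X Y W (cmp Y Z W h g) f }.
Arguments Hom {c} _ _.
Arguments idm {c} _.
Arguments cmp {c X Y Z} _ _.

Record Functor (C D : Cat) := {
  fobj :> C -> D;
  fmap : forall X Y : C, Hom X Y -> Hom (fobj X) (fobj Y);
  fmap_id : forall X, fmap X X (idm X) = idm (fobj X);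
  fmap_cmp : forall X Y Z (g : Hom Y Z) (f : Hom X Y),
      fmap X Z (cmp g f) = cmp (fmap Y Z g) (fmap X Y f) }.
Arguments fobj {C D} _ _.
Arguments fmap {C D} _ {X Y} _.

Definition Fid (C : Cat) : Functor C C.
Proof.
  refine {| fobj := fun X => X; fmap := fun X Y f => f |}; reflexivity.
Defined.

Definition Fcomp {B C D : Cat} (G : Functor C D) (F : Functor B C) : Functor B D.
Proof.
  refine {| fobj := fun X => G (F X); fmap := fun X Y f => fmap G (fmap F f) |}.
  - intro X. rewrite !fmap_id. reflexivity.
  - intros. rewrite !fmap_cmp. reflexivity.
Defined.

Record NT {C D : Cat} (F G : Functor C D) := {
  ntc :> forall X : C, Hom (F X) (G X);
  nt_nat : forall X Y (f : Hom X Y), cmp (ntc Y) (fmap F f) = cmp (fmap G f) (ntc X) }.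
Arguments ntc {C D F G} _ _.

Definition NTid {C D : Cat} (F : Functor C D) : NT F F.
Proof.
  refine (Build_NT _ _ F F (fun X => idm (F X)) _).
  intros. rewrite cmp_idl, cmp_idr. reflexivity.
Defined.

Definition NTv {C D : Cat} {F G H : Functor C D} (b : NT G H) (a : NT F G) : NT F H.
Proof.
  refine (Build_NT _ _ F H (fun X => cmp (b X) (a X)) _).
  intros. rewrite <- cmp_assoc, nt_nat, cmp_assoc, nt_nat, cmp_assoc. reflexivity.
Defined.

Definition NTh {B C D : Cat} {F F' : Functor B C} {H H' : Functor C D}
  (b : NT H H') (a : NT F F') : NT (Fcomp H F) (Fcomp H' F').
Proof.
  refine (Build_NT _ _ (Fcomp H F) (Fcomp H' F')
            (fun X => cmp (b (F' X)) (fmap H (a X))) _).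
  intros X Y f; simpl.
  rewrite <- cmp_assoc. rewrite <- (fmap_cmp _ _ H).
  rewrite (nt_nat _ _ a). rewrite fmap_cmp, cmp_assoc.
  rewrite (nt_nat _ _ b). rewrite <- cmp_assoc. reflexivity.
Defined.

Lemma Fcomp_assoc {A B C D : Cat} (H : Functor C D) (G : Functor B C) (F : Functor A B) :
  Fcomp (Fcomp H G) F = Fcomp H (Fcomp G F).
Proof. unfold Fcomp; simpl; f_equal; apply proof_irrelevance. Qed.

Lemma Fcomp_id_l {C D : Cat} (F : Functor C D) : Fcomp (Fid D) F = F.
Proof. destruct F; unfold Fcomp; simpl; f_equal; apply proof_irrelevance. Qed.

Lemma Fcomp_id_r {C D : Cat} (F : Functor C D) : Fcomp F (Fid C) = F.
Proof. destruct F; unfold Fcomp; simpl; f_equal; apply proof_irrelevance. Qed.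

Definition tr {T : Type} (P : T -> Type) {x y : T} (e : x = y) (a : P x) : P y :=
  match e in _ = z return P z with eq_refl => a end.

Definition trHom {C : Cat} {a a' b b' : C} (e1 : a = a') (e2 : b = b')
  (h : Hom a b) : Hom a' b' :=
  match e1 in _ = x, e2 in _ = y return Hom x y with eq_refl, eq_refl => h end.

Record Pos := {
  pcar :> Type;
  ple : pcar -> pcar -> Prop;
  ple_refl : forall x, ple x x;
  ple_trans : forall x y z, ple x y -> ple y z -> ple x z;
  ple_anti : forall x y, ple x y -> ple y x -> x = y }.
Arguments ple {p} _ _.

(* a doctrine P : C^op -> Pos; dre t is the reindexing P(t) *)
Record Doctrine (C : Cat) := {
  dob :> C -> Pos;
  dre : forall X Y : C, Hom X Y -> dob Y -> dob X;
  dre_mono : forall X Y (t : Hom X Y) a b, ple a b -> ple (dre X Y t a) (dre X Y t b);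
  dre_id : forall X a, dre X X (idm X) a = a;
  dre_cmp : forall X Y Z (g : Hom Y Z) (f : Hom X Y) a,
      dre X Z (cmp g f) a = dre X Y f (dre Y Z g a) }.
Arguments dob {C} _ _.
Arguments dre {C} _ {X Y} _ _.

Definition DocComp {C D : Cat} (Q : Doctrine D) (F : Functor C D) : Doctrine C.
Proof.
  refine {| dob := fun X => Q (F X); dre := fun X Y t => dre Q (fmap F t) |}.
  - intros. apply dre_mono. assumption.
  - intros. rewrite fmap_id. apply dre_id.
  - intros. rewrite fmap_cmp. apply dre_cmp.
Defined.

Notation DTfam P Q F := (forall X, pcar (dob P X) -> pcar (dob Q (fobj F X))).

Definition is_dnat {C D : Cat} {P : Doctrine C} {Q : Doctrine D} {F : Functor C D}
  (f : DTfam P Q F) : Prop :=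
  (forall X a b, ple a b -> ple (f X a) (f X b)) /\
  (forall X Y (t : Hom X Y) a, f X (dre P t a) = dre Q (fmap F t) (f Y a)).

Record DNT {C D : Cat} (P : Doctrine C) (Q : Doctrine D) (F : Functor C D) := {
  dntc :> DTfam P Q F;
  dnt_ok : is_dnat dntc }.
Arguments dntc {C D P Q F} _ _ _.

Record IdxArr {C D : Cat} (P : Doctrine C) (Q : Doctrine D) := {
  iaF : Functor C D;
  iaf : DTfam P Q iaF }.
Arguments iaF {C D P Q} _.
Arguments iaf {C D P Q} _ _ _.

Definition is_idxarr {C D : Cat} {P : Doctrine C} {Q : Doctrine D} (u : IdxArr P Q) :=
  is_dnat (iaf u).

Definition IAid {C : Cat} (P : Doctrine C) : IdxArr P P :=
  {| iaF := Fid C; iaf := fun X a => a |}.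

Definition IAcomp {B C D : Cat} {P : Doctrine B} {Q : Doctrine C} {R : Doctrine D}
  (v : IdxArr Q R) (u : IdxArr P Q) : IdxArr P R :=
  {| iaF := Fcomp (iaF v) (iaF u);
     iaf := fun X a => iaf v (iaF u X) (iaf u X a) |}.

Definition is_idx2 {C D : Cat} {P : Doctrine C} {Q : Doctrine D} (u u' : IdxArr P Q)
  (th : NT (iaF u) (iaF u')) : Prop :=
  forall X a, ple (iaf u X a) (dre Q (th X) (iaf u' X a)).

Definition is_interior {C : Cat} (M : Doctrine C) (box : DTfam M M (Fid C)) : Prop :=
  is_dnat box /\
  (forall X a, ple (box X a) a) /\
  (forall X a, ple (box X a) (box X (box X a))).

Definition is_box_arr {C D : Cat} {M : Doctrine C} {N : Doctrine D}
  (box : DTfam M M (Fid C)) (box' : DTfam N N (Fid D)) (u : IdxArr M N) : Prop :=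
  is_idxarr u /\
  (forall X a, ple (iaf u X (box X a)) (box' (iaF u X) (iaf u X a))).

Record Adj := {
  aC : Cat; aD : Cat;
  aP : Doctrine aC; aQ : Doctrine aD;
  aL : Functor aC aD; alam : DNT aP aQ aL;
  aR : Functor aD aC; arho : DNT aQ aP aR;
  aeta : NT (Fid aC) (Fcomp aR aL);
  aeps : NT (Fcomp aL aR) (Fid aD);
  a_tri1 : forall X : aC, cmp (aeps (aL X)) (fmap aL (aeta X)) = idm (aL X);
  a_tri2 : forall Y : aD, cmp (fmap aR (aeps Y)) (aeta (aR Y)) = idm (aR Y);
  a_unit : forall (X : aC) (a : aP X), ple a (dre aP (aeta X) (arho (aL X) (alam X a)));
  a_counit : forall (Y : aD) (b : aQ Y), ple (alam (aR Y) (arho Y b)) (dre aQ (aeps Y) b) }.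

(* raw 1-arrow (F,f,G,g,theta) of Adj(IdxPos); the functor equation GL^A = L^B F
   is kept in the data since it is needed to type the remaining conditions *)
Record AdjArr (A B : Adj) := {
  uF : Functor (aC A) (aC B);
  uf : DTfam (aP A) (aP B) uF;
  uG : Functor (aD A) (aD B);
  ug : DTfam (aQ A) (aQ B) uG;
  uth : NT (Fcomp uF (aR A)) (Fcomp (aR B) uG);
  uGL : Fcomp uG (aL A) = Fcomp (aL B) uF }.
Arguments uF {A B} _.
Arguments uf {A B} _ _ _.
Arguments uG {A B} _.
Arguments ug {A B} _ _ _.
Arguments uth {A B} _.
Arguments uGL {A B} _.

Definition eGL {A B : Adj} (u : AdjArr A B) (X : aC A) :
  uG u (aL A X) = aL B (uF u X) :=
  f_equal (fun H : Functor (aC A) (aD B) => fobj H X) (uGL u).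

Definition is_adjarr {A B : Adj} (u : AdjArr A B) : Prop :=
  is_dnat (uf u) /\ is_dnat (ug u) /\
  (* (theta L^A) . (F eta^A) = eta^B F *)
  (forall X : aC A,
     tr (fun Y => Hom (uF u X) (aR B Y)) (eGL u X)
        (cmp (uth u (aL A X)) (fmap (uF u) (aeta A X)))
     = aeta B (uF u X)) /\
  (* g_{L^A X} o lambda^A_X = lambda^B_{FX} o f_X *)
  (forall (X : aC A) (a : aP A X),
     tr (fun Y => pcar (dob (aQ B) Y)) (eGL u X) (ug u (aL A X) (alam A X a))
     = alam B (uF u X) (uf u X a)) /\
  (forall (Y : aD A) (b : aQ A Y),
     ple (uf u (aR A Y) (arho A Y b)) (dre (aP B) (uth u Y) (arho B (uG u Y) (ug u Y b)))).

Definition AdjId (A : Adj) : AdjArr A A.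
Proof.
  refine {| uF := Fid (aC A); uf := fun X a => a; uG := Fid (aD A); ug := fun X a => a;
            uth := Build_NT _ _ (Fcomp (Fid (aC A)) (aR A)) (Fcomp (aR A) (Fid (aD A)))
                     (fun Y => idm (aR A Y)) _ |}.
  - intros; simpl. rewrite cmp_idl, cmp_idr. reflexivity.
  - rewrite Fcomp_id_l, Fcomp_id_r. reflexivity.
Defined.

Definition thcomp {A B C : Adj} (v : AdjArr B C) (u : AdjArr A B) :
  NT (Fcomp (Fcomp (uF v) (uF u)) (aR A)) (Fcomp (aR C) (Fcomp (uG v) (uG u))).
Proof.
  refine (Build_NT _ _ (Fcomp (Fcomp (uF v) (uF u)) (aR A)) (Fcomp (aR C) (Fcomp (uG v) (uG u)))
            (fun Y => cmp (uth v (uG u Y)) (fmap (uF v) (uth u Y))) _).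
  intros X Y f; simpl.
  rewrite <- cmp_assoc, <- fmap_cmp.
  pose proof (nt_nat _ _ (uth u) X Y f) as H; simpl in H. rewrite H.
  rewrite fmap_cmp, cmp_assoc.
  pose proof (nt_nat _ _ (uth v) _ _ (fmap (uG u) f)) as H'; simpl in H'. rewrite H'.
  rewrite cmp_assoc. reflexivity.
Defined.

Definition AdjComp {A B C : Adj} (v : AdjArr B C) (u : AdjArr A B) : AdjArr A C.
Proof.
  refine {| uF := Fcomp (uF v) (uF u);
            uf := fun X a => uf v (uF u X) (uf u X a);
            uG := Fcomp (uG v) (uG u);
            ug := fun X a => ug v (uG u X) (ug u X a);
            uth := thcomp v u |}.
  rewrite Fcomp_assoc, (uGL u), <- Fcomp_assoc, (uGL v), Fcomp_assoc. reflexivity.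
Defined.

Definition is_adj2 {A B : Adj} (u u' : AdjArr A B)
  (al : NT (uF u) (uF u')) (be : NT (uG u) (uG u')) : Prop :=
  (forall X a, ple (uf u X a) (dre (aP B) (al X) (uf u' X a))) /\
  (forall Y b, ple (ug u Y b) (dre (aQ B) (be Y) (ug u' Y b))) /\
  (* L^B alpha = beta L^A *)
  (forall X : aC A,
     fmap (aL B) (al X) = trHom (eGL u X) (eGL u' X) (be (aL A X))) /\
  (forall Y : aD A,
     cmp (uth u' Y) (al (aR A Y)) = cmp (fmap (aR B) (be Y)) (uth u Y)).

Definition Adj2 {A B : Adj} (u u' : AdjArr A B) : Type :=
  (NT (uF u) (uF u') * NT (uG u) (uG u'))%type.
Definition Adj2id {A B : Adj} (u : AdjArr A B) : Adj2 u u :=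
  (NTid (uF u), NTid (uG u)).
Definition Adj2v {A B : Adj} {u u' u'' : AdjArr A B}
  (q : Adj2 u' u'') (p : Adj2 u u') : Adj2 u u'' :=
  (NTv (fst q) (fst p), NTv (snd q) (snd p)).
Definition Adj2h {A B C : Adj} {u u' : AdjArr A B} {v v' : AdjArr B C}
  (q : Adj2 v v') (p : Adj2 u u') : Adj2 (AdjComp v u) (AdjComp v' u') :=
  (NTh (fst q) (fst p), NTh (snd q) (snd p)).

Definition AMdoc (A : Adj) : Doctrine (aC A) := DocComp (aQ A) (aL A).

Definition AMbox (A : Adj) : DTfam (AMdoc A) (AMdoc A) (Fid (aC A)) :=
  fun X (a : pcar (dob (aQ A) (aL A X))) => alam A X (dre (aP A) (aeta A X) (arho A (aL A X) a)).

Definition AM1 {A B : Adj} (u : AdjArr A B) : IdxArr (AMdoc A) (AMdoc B) :=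
  @Build_IdxArr _ _ (AMdoc A) (AMdoc B) (uF u)
    (fun X (a : pcar (dob (aQ A) (aL A X))) =>
       tr (fun Y => pcar (dob (aQ B) Y)) (eGL u X) (ug u (aL A X) a)).

Definition AM2 {A B : Adj} {u u' : AdjArr A B} (p : Adj2 u u') : NT (uF u) (uF u') :=
  fst p.

(* The operator box = lambda o P(eta) o rho is an interior operator because
   the adjunction conditions say exactly that rho-then-lambda lies below the
   counit (so box a <= Q(eps o L eta) a = a by the triangle identity) and that
   lambda-then-rho lies above the unit (so box <= box o box).  For a 1-arrow,
   g commutes with lambda, f is lax for rho along theta, and theta o F eta is
   eta^B F, which together give g (box a) <= box (g a).  The remaining clauses
   only need to move elements along the equation G L^A = L^B F, and any two
   transports along the same equation agree by proof irrelevance. *)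
From Stdlib Require Import ProofIrrelevance FunctionalExtensionality.

Lemma dnt_mono {C D : Cat} {P : Doctrine C} {Q : Doctrine D} {F : Functor C D}
  (f : DNT P Q F) (X : C) (a b : P X) :
  ple a b -> ple (f X a) (f X b).
Proof. apply (proj1 (dnt_ok _ _ _ f)). Qed.

Lemma dnt_nat {C D : Cat} {P : Doctrine C} {Q : Doctrine D} {F : Functor C D}
  (f : DNT P Q F) (X Y : C) (t : Hom X Y) (a : P Y) :
  f X (dre P t a) = dre Q (fmap F t) (f Y a).
Proof. apply (proj2 (dnt_ok _ _ _ f)). Qed.

Notation trD Q := (tr (fun Y => pcar (dob Q Y))).

Lemma tr_irrelevant {T : Type} (P : T -> Type) (x y : T) (e1 e2 : x = y) (a : P x) :
  tr P e1 a = tr P e2 a.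
Proof. now rewrite (proof_irrelevance _ e1 e2). Qed.

Lemma tr_loop {T : Type} (P : T -> Type) (x : T) (e : x = x) (a : P x) : tr P e a = a.
Proof. exact (tr_irrelevant P x x e eq_refl a). Qed.

Lemma tr_trans {T : Type} (P : T -> Type) (x y z : T) (e1 : x = y) (e2 : y = z) (a : P x) :
  tr P e2 (tr P e1 a) = tr P (eq_trans e1 e2) a.
Proof. now destruct e1, e2. Qed.

Lemma tr_ple {D : Cat} (Q : Doctrine D) {y z : D} (e : y = z) (b b' : Q y) :
  ple b b' -> ple (trD Q e b) (trD Q e b').
Proof. now destruct e. Qed.

Lemma tr_dre_fmap {C D : Cat} (Q : Doctrine D) (H1 H2 : Functor C D) (e : H1 = H2)
  (X Y : C) (t : Hom X Y) (b : Q (H1 Y)) :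
  trD Q (f_equal (fun H : Functor C D => fobj H X) e) (dre Q (fmap H1 t) b)
  = dre Q (fmap H2 t) (trD Q (f_equal (fun H : Functor C D => fobj H Y) e) b).
Proof. now destruct e. Qed.

Lemma dre_trHom {D : Cat} (Q : Doctrine D) (y1 z1 y2 z2 : D) (e1 : y1 = z1) (e2 : y2 = z2)
  (h : Hom y1 y2) (b : Q y2) :
  dre Q (trHom e1 e2 h) (trD Q e2 b) = trD Q e1 (dre Q h b).
Proof. now destruct e1, e2. Qed.

Lemma tr_fobj_component {D D' : Cat} (Q : Doctrine D) (Q' : Doctrine D') (G : Functor D D')
  (g : DTfam Q Q' G) (y z : D) (e : y = z) (b : Q y) :
  trD Q' (f_equal (fobj G) e) (g y b) = g z (trD Q e b).
Proof. now destruct e. Qed.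

Lemma dre_tr_codomain {C D : Cat} (P : Doctrine C) (Q : Doctrine D) (R : Functor D C)
  (rho : DTfam Q P R) (x : C) (y y' : D) (e : y = y') (h : Hom x (R y)) (b : Q y) :
  dre P h (rho y b)
  = dre P (tr (fun Y => Hom x (R Y)) e h) (rho y' (trD Q e b)).
Proof. now destruct e. Qed.

Section AdjunctionBox.
Variable A : Adj.

Lemma AMbox_mono (X : aC A) (a b : AMdoc A X) :
  ple a b -> ple (AMbox A X a) (AMbox A X b).
Proof.
  intro Hab. apply (dnt_mono (alam A)), dre_mono, (dnt_mono (arho A)), Hab.
Qed.

Lemma AMbox_nat (X Y : aC A) (t : Hom X Y) (a : AMdoc A Y) :
  AMbox A X (dre (AMdoc A) t a) = dre (AMdoc A) t (AMbox A Y a).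
Proof.
  unfold AMbox; simpl.
  rewrite (dnt_nat (arho A)), <- dre_cmp.
  pose proof (nt_nat _ _ (aeta A) X Y t) as eta_nat; simpl in eta_nat.
  now rewrite <- eta_nat, dre_cmp, (dnt_nat (alam A)).
Qed.

Lemma AMbox_le (X : aC A) (a : AMdoc A X) : ple (AMbox A X a) a.
Proof.
  unfold AMbox; simpl. rewrite (dnt_nat (alam A)).
  eapply ple_trans; [apply dre_mono, a_counit|].
  rewrite <- dre_cmp; simpl.
  pose proof (a_tri1 A X) as tri; simpl in tri.
  rewrite tri, dre_id. apply ple_refl.
Qed.

Lemma AMbox_le_boxbox (X : aC A) (a : AMdoc A X) :
  ple (AMbox A X a) (AMbox A X (AMbox A X a)).
Proof. apply (dnt_mono (alam A)), a_unit. Qed.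

Lemma AMbox_interior : is_interior (AMdoc A) (AMbox A).
Proof.
  split; [split|split].
  - exact AMbox_mono.
  - exact AMbox_nat.
  - exact AMbox_le.
  - exact AMbox_le_boxbox.
Qed.

End AdjunctionBox.

Section AdjunctionArrow.
Variables A B : Adj.
Variable u : AdjArr A B.
Hypothesis u_adjarr : is_adjarr u.

Lemma AM1_idxarr : is_idxarr (AM1 u).
Proof.
  destruct u_adjarr as (_ & [g_mono g_nat] & _).
  split.
  - intros X a b Hab. apply (tr_ple (aQ B)), g_mono, Hab.
  - intros X Y t a. simpl. rewrite g_nat.
    exact (tr_dre_fmap (aQ B) _ _ (uGL u) X Y t _).
Qed.

Lemma AM1_box_le (X : aC A) (a : AMdoc A X) :
  ple (iaf (AM1 u) X (AMbox A X a)) (AMbox B (uF u X) (iaf (AM1 u) X a)).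
Proof.
  destruct u_adjarr as ([_ f_nat] & _ & th_eta & g_lam & f_rho).
  simpl; unfold AMbox; fold (eGL u X).
  rewrite g_lam, f_nat. apply (dnt_mono (alam B)).
  eapply ple_trans; [apply dre_mono, f_rho|].
  rewrite <- dre_cmp, <- th_eta.
  rewrite <- (dre_tr_codomain (aP B) (aQ B) (aR B) (arho B) _ _ _ (eGL u X)).
  apply ple_refl.
Qed.

Lemma AM1_box_arr : is_box_arr (AMbox A) (AMbox B) (AM1 u).
Proof. split; [exact AM1_idxarr | exact AM1_box_le]. Qed.

End AdjunctionArrow.

Lemma AM2_idx2 (A B : Adj) (u u' : AdjArr A B) (p : Adj2 u u') :
  is_adj2 u u' (fst p) (snd p) -> is_idx2 (AM1 u) (AM1 u') (AM2 p).
Proof.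
  intros (_ & be_le & L_al & _) X a; simpl; unfold AM2.
  rewrite L_al, dre_trHom. apply tr_ple, be_le.
Qed.

Lemma AM1_id (A : Adj) : AM1 (AdjId A) = IAid (AMdoc A).
Proof.
  unfold AM1, IAid; simpl; f_equal.
  apply functional_extensionality_dep; intro X.
  apply functional_extensionality_dep; intro a.
  exact (tr_loop (fun Y => pcar (dob (aQ A) Y)) _ _ a).
Qed.

Lemma AM1_comp (A B C : Adj) (u : AdjArr A B) (v : AdjArr B C) :
  AM1 (AdjComp v u) = IAcomp (AM1 v) (AM1 u).
Proof.
  unfold AM1, IAcomp; simpl; f_equal.
  apply functional_extensionality_dep; intro X.
  apply functional_extensionality_dep; intro a.
  rewrite <- (tr_fobj_component (aQ B) (aQ C) (uG v) (ug v)).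
  rewrite (tr_trans (fun Y => pcar (dob (aQ C) Y))).
  apply (tr_irrelevant (fun Y => pcar (dob (aQ C) Y))).
Qed.

Theorem proposition5p13 :
  (* objects: (Q^A o (L^A)^op, box^A) is an object of box-IdxPos *)
  (forall A : Adj, is_interior (AMdoc A) (AMbox A)) /\
  (* 1-arrows: (F, g (L^A)^op) is a 1-arrow of box-IdxPos *)
  (forall (A B : Adj) (u : AdjArr A B),
     is_adjarr u -> is_box_arr (AMbox A) (AMbox B) (AM1 u)) /\
  (* 2-arrows: alpha is a 2-arrow of box-IdxPos *)
  (forall (A B : Adj) (u u' : AdjArr A B) (p : Adj2 u u'),
     is_adjarr u -> is_adjarr u' -> is_adj2 u u' (fst p) (snd p) ->
     is_idx2 (AM1 u) (AM1 u') (AM2 p)) /\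
  (* preservation of identity 1-arrows *)
  (forall A : Adj, AM1 (AdjId A) = IAid (AMdoc A)) /\
  (* preservation of composition of 1-arrows *)
  (forall (A B C : Adj) (u : AdjArr A B) (v : AdjArr B C),
     is_adjarr u -> is_adjarr v ->
     AM1 (AdjComp v u) = IAcomp (AM1 v) (AM1 u)) /\
  (* preservation of identity 2-arrows *)
  (forall (A B : Adj) (u : AdjArr A B), AM2 (Adj2id u) = NTid (iaF (AM1 u))) /\
  (* preservation of vertical composition of 2-arrows *)
  (forall (A B : Adj) (u u' u'' : AdjArr A B) (p : Adj2 u u') (q : Adj2 u' u''),
     AM2 (Adj2v q p) = NTv (AM2 q) (AM2 p)) /\
  (* preservation of horizontal composition of 2-arrows *)
  (forall (A B C : Adj) (u u' : AdjArr A B) (v v' : AdjArr B C)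
          (p : Adj2 u u') (q : Adj2 v v'),
     AM2 (Adj2h q p) = NTh (AM2 q) (AM2 p)).
Proof.
  (* AM2 is the first projection, so it preserves the 2-categorical
     structure on the nose. *)
  split; [exact AMbox_interior|].
  split; [exact AM1_box_arr|].
  split; [intros A B u u' p _ _; apply AM2_idx2|].
  split; [exact AM1_id|].
  split; [intros A B C u v _ _; apply AM1_comp|].
  repeat split.
Qed.
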